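(* Let $\alpha_x,\alpha_y,\alpha_z>1$ and consider the Chamon model with these dimensions. For $i=0,1,2,3$ let $C_i=\{s_i+2\lambda_x e_x^{+}+2\lambda_y e_y^{+}+2\lambda_z e_z^{+}:(\lambda_x,\lambda_y,\lambda_z)\in\mathbb Z_{\alpha_x}\times\mathbb Z_{\alpha_y}\times\mathbb Z_{\alpha_z}\}\subseteq\mathcal A\setminus\mathcal D$, where $s_0=(0,1,0)$, $s_1=(1,0,0)$, $s_2=(0,0,1)$, $s_3=(1,1,1)$. Then for every Pauli operator $E$ on the data qubits and every $i\in\{0,1,2,3\}$, the number of $s\in C_i$ such that $E$ anticommutes with $S_s$ is even.
   Context: Chamon model: let $\mathcal A=\mathbb Z_{2\alpha_x}\times\mathbb Z_{2\alpha_y}\times\mathbb Z_{2\alpha_z}$ and $\mathcal D=\{(x,y,z)\in\mathcal A: x+y+z \text{ even}\}$, one qubit per point of $\mathcal D$. With $e_x^{\pm}=(\pm1,0,0)$, $e_y^{\pm}=(0,\pm1,0)$, $e_z^{\pm}=(0,0,\pm1)$, for $s\in\mathcal A\setminus\mathcal D$ the stabilizer generator is $S_s=X_{s+e_x^+}X_{s+e_x^-}Y_{s+e_y^+}Y_{s+e_y^-}Z_{s+e_z^+}Z_{s+e_z^-}$ (single-qubit Paulis, $Y=ZX$). A stabilizer's measurement outcome is changed by an error $E$ exactly when $E$ anticommutes with it. *)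

From mathcomp Require Import all_boot all_algebra.
Set Implicit Arguments. Unset Strict Implicit. Unset Printing Implicit Defensive.
Import GRing.Theory.
Local Open Scope ring_scope.

(* Points of A.  'Z_(2*a) is Z/(2a) since a > 1 in all uses. *)
Definition point (ax ay az : nat) : Type :=
  ('Z_(2 * ax) * 'Z_(2 * ay) * 'Z_(2 * az))%type.

(* x + y + z even (parity of representatives is well defined as moduli are even) *)
Definition in_D ax ay az (p : point ax ay az) : bool :=
  ~~ odd (val p.1.1 + val p.1.2 + val p.2)%N.

Definition qubit (ax ay az : nat) : Type := {p : point ax ay az | in_D p}.

(* Single-qubit Paulis up to phase (Y = ZX). *)
Inductive pauli1 := PI | PX | PY | PZ.

Definition anticomm1 (p q : pauli1) : bool :=
  match p, q with
  | PI, _ | _, PI => false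
  | PX, PX | PY, PY | PZ, PZ => false
  | _, _ => true
  end.

Definition pauli_op (ax ay az : nat) : Type := qubit ax ay az -> pauli1.

Definition anticommute ax ay az (P Q : pauli_op ax ay az) : bool :=
  odd #|[pred q : qubit ax ay az | anticomm1 (P q) (Q q)]|.

Definition addp ax ay az (p q : point ax ay az) : point ax ay az :=
  (p.1.1 + q.1.1, p.1.2 + q.1.2, p.2 + q.2).

Definition pt ax ay az (x : 'Z_(2 * ax)) (y : 'Z_(2 * ay)) (z : 'Z_(2 * az))
  : point ax ay az := (x, y, z).

Definition stab ax ay az (s : point ax ay az) : pauli_op ax ay az :=
  fun q =>
    let p := val q in
    if (p == addp s (pt 1 0 0)) || (p == addp s (pt (-1) 0 0)) then PX
    else if (p == addp s (pt 0 1 0)) || (p == addp s (pt 0 (-1) 0)) then PY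
    else if (p == addp s (pt 0 0 1)) || (p == addp s (pt 0 0 (-1))) then PZ
    else PI.

Definition s_base ax ay az (i : 'I_4) : point ax ay az :=
  match nat_of_ord i with
  | O => pt 0 1 0
  | S O => pt 1 0 0
  | S (S O) => pt 0 0 1
  | _ => pt 1 1 1
  end.

Definition Cset (ax ay az : nat) (i : 'I_4) : {set point ax ay az} :=
  [set addp (s_base ax ay az i)
        (pt (2 * l.1.1)%N%:R (2 * l.1.2)%N%:R (2 * l.2)%N%:R)
   | l : 'I_ax * 'I_ay * 'I_az].

From mathcomp Require Import all_boot all_algebra.
From mathcomp Require Import ring zify.
Import GRing.Theory.
Set Implicit Arguments. Unset Strict Implicit. Unset Printing Implicit Defensive.

(* Fix a data qubit q.  The stabilizers S_s, s in C_i, that act nontrivially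
   on q come in pairs {s, 2q - s}: the reflection through q maps C_i (a coset
   of 2A) to itself, swaps the two neighbours of s along each axis and hence
   keeps the Pauli letter S_s places on q, and it has no fixed point since
   2(q - s) = +-2e_k is nonzero when alpha_k > 1.  So for every q an even number
   of s in C_i anticommute with E on q, and counting the pairs (s, q) modulo 2
   shows that evenly many S_s anticommute with E. *)

Lemma even_card_involution (T : finType) (r : T -> T) (A : {set T}) :
  involutive r -> {in A, forall x, r x \in A} -> {in A, forall x, r x != x} ->
  ~~ odd #|A|.
Proof.
move=> rK rA r_nfix.
pose B := [set x in A | enum_rank x < enum_rank (r x)].
have sBA : B \subset A by apply/subsetP => x; rewrite inE => /andP[].
have r_swap : A :\: B = r @: B.
  apply/setP => y; apply/idP/imsetP => [|[x]].
  - rewrite !inE negb_and => /andP[/orP[/negP //|] ge_y yA].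
    exists (r y); last by rewrite rK.
    rewrite inE rA //= rK.
    have ne_y : enum_rank (r y) != enum_rank y.
      by rewrite (inj_eq enum_rank_inj) r_nfix.
    by rewrite ltn_neqAle ne_y leqNgt.
  - rewrite inE => /andP[xA lt_x] ->.
    by rewrite !inE rA // rK -leqNgt ltnW.
rewrite -(cardsID B A) (setIidPr sBA) r_swap card_imset ?oddD ?addbb //.
exact: can_inj rK.
Qed.

Lemma even_card_odd_rows (S Q : finType) (C : {set S}) (R : S -> Q -> bool) :
  (forall q, ~~ odd #|[set s in C | R s q]|) ->
  ~~ odd #|[set s in C | odd #|[pred q | R s q]|]|.
Proof.
have odd_sum := big_morph odd oddD (erefl : odd 0 = false).
have odd_card (T : finType) (D : {set T}) (P : pred T) :
    odd #|[set x in D | P x]| = \big[addb/false]_(x in D) P x.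
  rewrite -sum1_card odd_sum big_mkcond [RHS]big_mkcond /=.
  by apply: eq_bigr => x _; rewrite inE; case: (x \in D); case: (P x).
have odd_row s : odd #|[pred q | R s q]| = \big[addb/false]_(q in [set: Q]) R s q.
  by rewrite -odd_card; congr odd; apply: eq_card => q; rewrite !inE.
move=> even_col; rewrite odd_card.
under eq_bigr => s _ do rewrite odd_row.
rewrite exchange_big big1 // => q _.
by rewrite -odd_card (negbTE (even_col q)).
Qed.

Section ChamonStabilizers.
Local Open Scope ring_scope.

Lemma Zp_double_one_neq0 (a : nat) : (1 < a)%N -> (1 + 1 : 'Z_(2 * a)) != 0.
Proof.
move=> a_gt1; apply/eqP => /(congr1 val); rewrite /= Zp_cast ?modn_small; lia.
Qed.

Lemma Zp_halve (a : nat) (w : 'Z_(2 * a)) : (0 < a)%N ->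
  exists m : 'I_a, (2 * m)%:R = w + w.
Proof.
move=> a_gt0; have lt_m : (val w %% a < a)%N by rewrite ltn_mod.
exists (Ordinal lt_m); apply: val_inj; rewrite /= Zp_nat /= muln_modr.
have Zp_mod : (Zp_trunc (2 * a)).+2 = (2 * a)%N by rewrite Zp_cast //; lia.
by move: (val w) => n; rewrite Zp_mod modn_mod mul2n addnn.
Qed.

Variables ax ay az : nat.
Local Notation point := (point ax ay az).
Local Notation qubit := (qubit ax ay az).

Definition mirror (p s : point) : point := p + p - s.

Lemma mirrorK p : involutive (mirror p).
Proof. by move=> s; rewrite /mirror opprB addrC subrK. Qed.

Definition stab_letter (d : point) : pauli1 :=
  if (d == pt 1 0 0) || (d == pt (-1) 0 0) then PX
  else if (d == pt 0 1 0) || (d == pt 0 (-1) 0) then PY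
  else if (d == pt 0 0 1) || (d == pt 0 0 (-1)) then PZ
  else PI.

Lemma stabE (s : point) (q : qubit) : stab s q = stab_letter (val q - s).
Proof. by rewrite /stab /stab_letter !subr_eq !(addrC _ s). Qed.

Lemma opp_pt x y z : - pt x y z = pt (- x) (- y) (- z) :> point.
Proof. by []. Qed.

Lemma stab_letterN d : stab_letter (- d) = stab_letter d.
Proof.
rewrite /stab_letter !eqr_oppLR !opp_pt !oppr0 !opprK.
by rewrite (orbC (d == pt (-1) 0 0)) (orbC (d == pt 0 (-1) 0)) (orbC (d == pt 0 0 (-1))).
Qed.

Lemma stab_mirror (q : qubit) s : stab (mirror (val q) s) q = stab s q.
Proof.
rewrite !stabE (_ : val q - mirror (val q) s = - (val q - s)) ?stab_letterN //.
by rewrite /mirror; ring.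
Qed.

Lemma pt_double_eq0 x y z :
  (pt x y z + pt x y z == 0 :> point) = [&& x + x == 0, y + y == 0 & z + z == 0].
Proof. by rewrite !xpair_eqE andbA. Qed.

Hypotheses (ax_gt1 : (1 < ax)%N) (ay_gt1 : (1 < ay)%N) (az_gt1 : (1 < az)%N).

Lemma stab_letter_double d : stab_letter d <> PI -> d + d != 0.
Proof.
rewrite /stab_letter.
case: ifP => [/orP[]/eqP-> _|_]; last case: ifP => [/orP[]/eqP-> _|_];
  last case: ifP => [/orP[]/eqP-> _|_ /(_ erefl) //];
  rewrite pt_double_eq0 addr0 eqxx ?andbT /= -?opprD ?oppr_eq0; exact: Zp_double_one_neq0.
Qed.

Lemma CsetP i s :
  reflect (exists t, s = s_base ax ay az i + (t + t)) (s \in Cset ax ay az i).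
Proof.
apply: (iffP imsetP) => [[l _ ->] | [[[t1 t2] t3] ->]].
  exists (pt l.1.1%:R l.1.2%:R l.2%:R).
  by rewrite !(mul2n (nat_of_ord _)) -!addnn !natrD.
have [m1 e1] := Zp_halve t1 (ltnW ax_gt1).
have [m2 e2] := Zp_halve t2 (ltnW ay_gt1).
have [m3 e3] := Zp_halve t3 (ltnW az_gt1).
by exists (m1, m2, m3); rewrite //= e1 e2 e3.
Qed.

Lemma mirror_Cset i p s : s \in Cset ax ay az i -> mirror p s \in Cset ax ay az i.
Proof.
case/CsetP => t ->; apply/CsetP; exists (p - s_base ax ay az i - t).
by rewrite /mirror; ring.
Qed.

Lemma even_card_anticomm_stab (e : pauli1) (q : qubit) i :
  ~~ odd #|[set s in Cset ax ay az i | anticomm1 e (stab s q)]|.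
Proof.
apply: (even_card_involution (mirrorK (val q))) => s; rewrite !inE => /andP[sC ac].
  by rewrite mirror_Cset // stab_mirror.
rewrite -subr_eq0 (_ : mirror _ s - s = (val q - s) + (val q - s)); last by rewrite /mirror; ring.
apply: stab_letter_double; rewrite -stabE => stab_I.
by move: ac; rewrite stab_I; case: e.
Qed.

End ChamonStabilizers.

Theorem lemma2 (ax ay az : nat) (hx : (1 < ax)%N) (hy : (1 < ay)%N) (hz : (1 < az)%N)
  (E : pauli_op ax ay az) (i : 'I_4) :
  ~~ odd #|[set s in Cset ax ay az i | anticommute E (stab s)]|.
Proof.
by apply: even_card_odd_rows => q; apply: even_card_anticomm_stab.
Qed.
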